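(* Let $L=\ell_1$, viewed as a subset of $\ell_2$ with the $\ell_2$-norm topology, let $u\in\ell_2\setminus\ell_1$, and let $C=\operatorname{co}(L\cup\{u\})$. Then $\operatorname{icr} C=C\setminus(L\cup\{u\})\neq\emptyset$, while $L\subseteq\operatorname{fri} C$; in particular $\emptyset\neq\operatorname{icr} C\neq\operatorname{fri} C$.
   Context: $\operatorname{co}$ denotes the convex hull (set of finite convex combinations). For a convex set $C$, a convex subset $F\subseteq C$ is a face of $C$ if for every $x\in F$ and all $y,z\in C$ with $x\in(y,z)=\{(1-t)y+tz:t\in(0,1)\}$ we have $y,z\in F$; $F_{\min}(x,C)$ is the intersection of all faces of $C$ containing $x\in C$. $\operatorname{icr} C=\{x\in C:\forall y\in C\ \exists z\in C,\ x\in(y,z)\}$; $\operatorname{fri} C=\{x\in C: C\subseteq\overline{F_{\min}(x,C)}\}$. *)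

From Stdlib Require Import Reals List.
From Coquelicot Require Import Coquelicot.
Open Scope R_scope.

Definition seqR := nat -> R.
Definition setS := seqR -> Prop.

Definition l2 (x : seqR) : Prop := ex_series (fun n => (x n) ^ 2).
Definition l1 (x : seqR) : Prop := ex_series (fun n => Rabs (x n)).

Definition l2norm (x : seqR) : R := sqrt (Series (fun n => (x n) ^ 2)).

Definition l2closure (S : setS) : setS := fun y =>
  l2 y /\ forall eps : R, 0 < eps ->
    exists s, S s /\ l2 s /\ l2norm (fun n => y n - s n) < eps.

Definition co (S : setS) : setS := fun x =>
  exists l : list (prod R seqR),
    List.Forall (fun p => 0 <= fst p /\ S (snd p)) l /\
    List.fold_right (fun p acc => fst p + acc) 0 l = 1 /\
    forall n, x n = List.fold_right (fun p acc => fst p * snd p n + acc) 0 l.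

Definition open_seg (y z : seqR) : setS := fun x =>
  exists t, 0 < t < 1 /\ forall n, x n = (1 - t) * y n + t * z n.

Definition convex (F : setS) : Prop :=
  forall y z t, F y -> F z -> 0 <= t <= 1 ->
    F (fun n => (1 - t) * y n + t * z n).

Definition face (F C : setS) : Prop :=
  convex F /\ (forall x, F x -> C x) /\
  forall x y z, F x -> C y -> C z -> open_seg y z x -> F y /\ F z.

Definition Fmin (x : seqR) (C : setS) : setS := fun w =>
  forall F, face F C -> F x -> F w.

Definition icr (C : setS) : setS := fun x =>
  C x /\ forall y, C y -> exists z, C z /\ open_seg y z x.

Definition fri (C : setS) : setS := fun x =>
  C x /\ forall w, C w -> l2closure (Fmin x C) w.

(* 1. l1 and l2 are linear subspaces of R^N, l1 ⊆ l2, and l1 is dense in l2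
      (finite truncations approximate any square-summable sequence).
   2. Every x ∈ C is x = A + s·u with A ∈ l1 and 0 ≤ s ≤ 1 (A = 0 when s = 1);
      conversely every A + s·u with A ∈ l1, 0 ≤ s < 1 lies in C.
   3. icr C: since u ∉ l1, a point of L cannot be pushed beyond itself away
      from u, nor u away from 0; every A + s·u with 0 < s < 1 can be pushed
      beyond itself away from any point of C.  Hence icr C = C \ (L ∪ {u}),
      which contains u/2.
   4. fri C: a point b of C whose reflection 2x - b also lies in C belongs to
      every face containing x.  For x ∈ L this puts all of L into F_min(x,C),
      and density of L in l2 (together with C ⊆ l2) gives L ⊆ fri C.
   In particular 0 ∈ fri C \ icr C. *)
From Stdlib Require Import Reals List Lra Lia FunctionalExtensionality.
From Coquelicot Require Import Coquelicot.
Open Scope R_scope.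

Lemma ex_series_zero : ex_series (fun _ : nat => 0).
Proof.
  exists 0. apply is_series_Reals. intros e he. exists 0%nat. intros n _.
  rewrite sum_eq_R0 by auto. unfold R_dist. rewrite Rminus_0_r, Rabs_R0. lra.
Qed.

Lemma series_tail_small (f : nat -> R) : ex_series f -> forall eps, 0 < eps ->
  exists N, (0 < N)%nat /\ Series (fun k => f (N + k)%nat) < eps.
Proof.
  intros hf eps he.
  pose proof (Series_correct _ hf) as hs. apply is_series_Reals in hs.
  destruct (hs eps he) as [N hN].
  exists (S N). split; [lia|].
  pose proof (Series_incr_n f (S N) ltac:(lia) hf) as hsplit.
  cbn [Init.Nat.pred] in hsplit.
  specialize (hN N ltac:(lia)). unfold R_dist in hN.
  apply Rabs_def2 in hN. lra.
Qed.

Lemma l1_ext (x y : seqR) : l1 x -> (forall n, x n = y n) -> l1 y.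
Proof. unfold l1; intros hx he. eapply ex_series_ext; [|exact hx]. intros n; simpl. now rewrite he. Qed.

Lemma l2_ext (x y : seqR) : l2 x -> (forall n, x n = y n) -> l2 y.
Proof. unfold l2; intros hx he. eapply ex_series_ext; [|exact hx]. intros n; simpl. now rewrite he. Qed.

Lemma l1_zero : l1 (fun _ => 0).
Proof. unfold l1. eapply ex_series_ext; [|exact ex_series_zero]. intros n; simpl. now rewrite Rabs_R0. Qed.

Lemma l1_lin (a b : R) (x y : seqR) : l1 x -> l1 y -> l1 (fun n => a * x n + b * y n).
Proof.
  unfold l1; intros hx hy.
  apply (@ex_series_le R_AbsRing R_CompleteNormedModule _
           (fun n => Rabs a * Rabs (x n) + Rabs b * Rabs (y n))).
  - intros n. change norm with Rabs. simpl. rewrite Rabs_Rabsolu.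
    eapply Rle_trans; [apply Rabs_triang|]. rewrite !Rabs_mult. lra.
  - apply (ex_series_plus (fun n => Rabs a * Rabs (x n)) (fun n => Rabs b * Rabs (y n))).
    + apply (ex_series_scal (Rabs a) (fun n => Rabs (x n))); auto.
    + apply (ex_series_scal (Rabs b) (fun n => Rabs (y n))); auto.
Qed.

(* l2 is a linear subspace: (a x + b y)^2 <= 2a^2 x^2 + 2b^2 y^2. *)
Lemma l2_lin (a b : R) (x y : seqR) : l2 x -> l2 y -> l2 (fun n => a * x n + b * y n).
Proof.
  unfold l2; intros hx hy.
  apply (@ex_series_le R_AbsRing R_CompleteNormedModule _
           (fun n => (2 * a ^ 2) * x n ^ 2 + (2 * b ^ 2) * y n ^ 2)).
  - intros n. change norm with Rabs. simpl.
    rewrite Rabs_pos_eq by (pose proof (pow2_ge_0 (a * x n + b * y n)); simpl in *; lra).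
    pose proof (pow2_ge_0 (a * x n - b * y n)). nra.
  - apply (ex_series_plus (fun n => (2 * a ^ 2) * x n ^ 2) (fun n => (2 * b ^ 2) * y n ^ 2)).
    + apply (ex_series_scal (2 * a ^ 2) (fun n => x n ^ 2)); auto.
    + apply (ex_series_scal (2 * b ^ 2) (fun n => y n ^ 2)); auto.
Qed.

Lemma l1_of_scaled (c : R) (u w : seqR) :
  c <> 0 -> l1 w -> (forall n, c * u n = w n) -> l1 u.
Proof.
  intros hc hw hu. apply (l1_ext (fun n => / c * w n + 0 * w n)); [apply l1_lin; auto|].
  intros n. rewrite <- hu. field. exact hc.
Qed.

(* l1 ⊆ l2: eventually |x n| <= 1, so x n ^ 2 <= |x n|. *)
Lemma l1_l2 (x : seqR) : l1 x -> l2 x.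
Proof.
  unfold l1, l2; intros hx.
  pose proof (ex_series_lim_0 _ hx) as hlim.
  apply is_lim_seq_spec in hlim. simpl in hlim.
  destruct (hlim (mkposreal 1 Rlt_0_1)) as [N hN]. simpl in hN.
  apply (ex_series_incr_n _ N).
  apply (@ex_series_le R_AbsRing R_CompleteNormedModule _ (fun k => Rabs (x (N + k)%nat))).
  - intros k. change norm with Rabs. specialize (hN (N + k)%nat ltac:(lia)).
    rewrite Rminus_0_r, Rabs_Rabsolu in hN. revert hN.
    generalize (x (N + k)%nat). intros v hv.
    replace (v ^ 2) with (v * v) by ring. rewrite Rabs_mult.
    pose proof (Rabs_pos v). nra.
  - apply (ex_series_incr_n _ N) in hx. exact hx.
Qed.

(* l1 is dense in l2: the truncation of w after N terms is in l1, and its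
   squared distance to w is the tail sum of w^2. *)
Lemma l1_dense_in_l2 (w : seqR) : l2 w -> forall eps, 0 < eps ->
  exists s, l1 s /\ l2norm (fun n => w n - s n) < eps.
Proof.
  intros hw eps he.
  destruct (series_tail_small _ hw (eps ^ 2) ltac:(nra)) as [N [hN hT]].
  set (trunc := fun n => if Compare_dec.lt_dec n N then w n else 0).
  exists trunc. split.
  { unfold l1. apply (ex_series_incr_n _ N).
    eapply ex_series_ext; [|exact ex_series_zero]. intros k. simpl.
    unfold trunc. destruct (Compare_dec.lt_dec (N + k) N); [lia|]. now rewrite Rabs_R0. }
  set (g := fun n => (w n - trunc n) ^ 2).
  assert (hg_tail : forall k, g (N + k)%nat = w (N + k)%nat ^ 2).
  { intros k. unfold g, trunc. destruct (Compare_dec.lt_dec (N + k) N); [lia|]. ring. }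
  assert (hg : ex_series g).
  { apply (ex_series_incr_n _ N). eapply ex_series_ext; [intros k; symmetry; apply hg_tail|].
    apply (ex_series_incr_n (fun n => w n ^ 2) N). exact hw. }
  unfold l2norm. fold g.
  rewrite (Series_incr_n g N hN hg), sum_eq_R0, Rplus_0_l.
  2:{ intros n hn. unfold g, trunc. destruct (Compare_dec.lt_dec n N); [ring|lia]. }
  rewrite (Series_ext _ (fun k => w (N + k)%nat ^ 2) hg_tail).
  destruct (Rle_lt_dec (Series (fun k => w (N + k)%nat ^ 2)) 0).
  - rewrite sqrt_neg_0; auto.
  - rewrite <- (sqrt_pow2 eps) by lra. apply sqrt_lt_1_alt. lra.
Qed.

(* A point b of C whose reflection 2x - b through x also lies in C belongs to
   every face of C containing x, since x is the midpoint of b and 2x - b. *)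
Lemma Fmin_reflection (C : setS) (x b : seqR) :
  C b -> C (fun n => 2 * x n - b n) -> Fmin x C b.
Proof.
  intros hb hr F [_ [_ hF]] hFx.
  apply (hF x b (fun n => 2 * x n - b n) hFx hb hr).
  exists (1 / 2). split; [lra|]. intros n. field.
Qed.

Section HullOfL1AndPoint.

Variable u : seqR.

Let C : setS := co (fun x => l1 x \/ x = u).

Let weight (l : list (prod R seqR)) : R := fold_right (fun p acc => fst p + acc) 0 l.
Let combo (l : list (prod R seqR)) (n : nat) : R :=
  fold_right (fun p acc => fst p * snd p n + acc) 0 l.

Lemma combo_decompose (l : list (prod R seqR)) :
  List.Forall (fun p => 0 <= fst p /\ (l1 (snd p) \/ snd p = u)) l ->
  exists A s, l1 A /\ 0 <= s <= weight l /\ (s = weight l -> forall n, A n = 0) /\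
    forall n, combo l n = A n + s * u n.
Proof.
  induction l as [|[w pt] l IH]; intros hl.
  - exists (fun _ => 0), 0. repeat split; [exact l1_zero | simpl; lra | simpl; lra |].
    intros n; simpl. ring.
  - inversion hl as [|? ? [hw hpt] hrest]; subst. simpl in hw, hpt.
    destruct (IH hrest) as [A [s [hA [hs [hs_full hcombo]]]]].
    destruct hpt as [hpt | ->].
    + exists (fun n => w * pt n + A n), s. split; [|split; [simpl; lra|split]].
      * apply (l1_ext (fun n => w * pt n + 1 * A n)); [apply l1_lin; auto | intros; ring].
      * simpl. intros hfull n. assert (w = 0) as -> by lra.
        rewrite (hs_full ltac:(lra) n). ring.
      * intros n. unfold combo in *. simpl. rewrite hcombo. ring.
    + exists A, (w + s). split; [auto|split; [simpl; lra|split]].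
      * simpl. intros hfull. apply hs_full. lra.
      * intros n. unfold combo in *. simpl. rewrite hcombo. ring.
Qed.

Lemma hull_decompose (x : seqR) : C x ->
  exists A s, l1 A /\ 0 <= s <= 1 /\ (s = 1 -> forall n, A n = 0) /\
    forall n, x n = A n + s * u n.
Proof.
  intros [l [hl [hw hx]]].
  destruct (combo_decompose l hl) as [A [s [hA [hs [hs_full hcombo]]]]].
  assert (hw1 : weight l = 1) by exact hw. rewrite hw1 in hs, hs_full.
  exists A, s. repeat split; auto; try lra. intros n. rewrite hx. apply hcombo.
Qed.

(* Conversely A + s u lies in C for A ∈ l1 and 0 <= s < 1:
   it is (1 - s) (A / (1 - s)) + s u. *)
Lemma hull_intro (A : seqR) (s : R) (z : seqR) :
  l1 A -> 0 <= s < 1 -> (forall n, z n = A n + s * u n) -> C z.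
Proof.
  intros hA hs hz.
  exists ((1 - s, fun n => A n / (1 - s)) :: (s, u) :: nil). split; [|split].
  - constructor; [|constructor; [|constructor]]; simpl; split; try lra.
    + left. apply (l1_ext (fun n => / (1 - s) * A n + 0 * A n)); [apply l1_lin; auto|].
      intros n; unfold Rdiv; ring.
    + now right.
  - simpl. ring.
  - intros n. simpl. rewrite hz. field. lra.
Qed.

Lemma hull_l1 (x : seqR) : l1 x -> C x.
Proof. intros hx. apply (hull_intro x 0); [auto|lra|intros; ring]. Qed.

Lemma hull_u : C u.
Proof.
  exists ((1, u) :: nil). split; [|split].
  - constructor; [|constructor]. simpl. split; [lra | now right].
  - simpl. ring.
  - intros n; simpl. ring.
Qed.

Lemma hull_l2 (hu2 : l2 u) (w : seqR) : C w -> l2 w.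
Proof.
  intros hw. destruct (hull_decompose w hw) as [A [s [hA [_ [_ hwA]]]]].
  apply (l2_ext (fun n => 1 * A n + s * u n)); [apply l2_lin; auto; apply l1_l2; auto|].
  intros n; rewrite hwA; ring.
Qed.

Hypothesis hu1 : ~ l1 u.

(* A point of l1 is not in icr C: extending the segment from u beyond x
   would write a positive multiple of u as an l1 sequence. *)
Lemma l1_not_icr (x : seqR) : l1 x -> ~ icr C x.
Proof.
  intros hx [_ hi]. destruct (hi u hull_u) as [z [hz [t [ht hxe]]]].
  destruct (hull_decompose z hz) as [A [r [hA [hr [_ hzA]]]]].
  apply hu1, (l1_of_scaled (1 - t + t * r) u (fun n => 1 * x n + (- t) * A n)); [nra|auto using l1_lin|].
  intros n. rewrite hxe, hzA. ring.
Qed.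

(* u is not in icr C: extending the segment from 0 beyond u would write
   a positive multiple of u as an l1 sequence. *)
Lemma u_not_icr : ~ icr C u.
Proof.
  intros [_ hi]. destruct (hi (fun _ => 0) (hull_l1 _ l1_zero)) as [z [hz [t [ht hue]]]].
  destruct (hull_decompose z hz) as [A [r [hA [hr [_ hzA]]]]].
  apply hu1, (l1_of_scaled (1 - t * r) u (fun n => t * A n + 0 * A n)); [nra|auto using l1_lin|].
  intros n. assert (E := hue n). rewrite hzA in E. lra.
Qed.

(* A point A + s u with 0 < s < 1 is in icr C: for y ∈ C and e small,
   z = (x - e y) / (1 - e) is again of the form A' + s' u with 0 <= s' < 1,
   and x = e y + (1 - e) z. *)
Lemma mixed_in_icr (A : seqR) (s : R) (x : seqR) :
  l1 A -> 0 < s < 1 -> (forall n, x n = A n + s * u n) -> icr C x.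
Proof.
  intros hA hs hxA. split; [apply (hull_intro A s); auto; lra|].
  intros y hy. destruct (hull_decompose y hy) as [B [r [hB [hr [_ hyB]]]]].
  set (e := Rmin s (1 - s) / 2).
  assert (he_pos : 0 < e) by (unfold e; pose proof (Rmin_pos s (1 - s)); lra).
  assert (he_s : e <= s / 2) by (unfold e; pose proof (Rmin_l s (1 - s)); lra).
  assert (he_1s : e <= (1 - s) / 2) by (unfold e; pose proof (Rmin_r s (1 - s)); lra).
  set (s' := (s - e * r) / (1 - e)).
  assert (hs' : s' * (1 - e) = s - e * r) by (unfold s'; field; lra).
  exists (fun n => (A n - e * B n) / (1 - e) + s' * u n). split.
  - apply (hull_intro (fun n => (A n - e * B n) / (1 - e)) s'); [| nra | intros; ring].
    apply (l1_ext (fun n => / (1 - e) * A n + (- e / (1 - e)) * B n)); [apply l1_lin; auto|].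
    intros n; field; lra.
  - exists (1 - e). split; [lra|]. intros n.
    rewrite hxA, hyB. apply (Rmult_eq_reg_l (1 - e)); [|lra].
    replace s with (s' * (1 - e) + e * r) at 1 by lra. field. lra.
Qed.

Lemma icr_hull_char (x : seqR) : icr C x <-> (C x /\ ~ l1 x /\ x <> u).
Proof.
  split.
  - intros hi. split; [apply hi|]. split.
    + intros hx. exact (l1_not_icr x hx hi).
    + intros ->. exact (u_not_icr hi).
  - intros [hC [hx hxu]].
    destruct (hull_decompose x hC) as [A [s [hA [hs [hs_full hxA]]]]].
    apply (mixed_in_icr A s); auto. split.
    + destruct (Req_dec s 0) as [-> | hs0]; [|lra].
      exfalso. apply hx, (l1_ext A); auto. intros n; rewrite hxA; ring.
    + destruct (Req_dec s 1) as [hs1 | hs1]; [|lra].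
      exfalso. apply hxu, functional_extensionality. intros n.
      rewrite hxA, (hs_full hs1 n), hs1. ring.
Qed.

(* Every point of l1 lies in fri C: L ⊆ F_min(x, C) by reflection, and L is
   dense in l2 ⊇ C. *)
Lemma l1_in_fri (hu2 : l2 u) (x : seqR) : l1 x -> fri C x.
Proof.
  intros hx. split; [apply hull_l1; auto|].
  intros w hw. split; [apply hull_l2; auto|]. intros eps he.
  destruct (l1_dense_in_l2 w (hull_l2 hu2 w hw) eps he) as [s [hs hdist]].
  exists s. split; [|split; [apply l1_l2; auto | exact hdist]].
  apply Fmin_reflection; apply hull_l1; auto.
  apply (l1_ext (fun n => 2 * x n + (-1) * s n)); [apply l1_lin; auto | intros; ring].
Qed.

End HullOfL1AndPoint.

Theorem mainTheorem20 (u : seqR) (hu2 : l2 u) (hu1 : ~ l1 u) :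
  let L := l1 in
  let C := co (fun x => L x \/ x = u) in
  (forall x, icr C x <-> (C x /\ ~ L x /\ x <> u)) /\
  (exists x, icr C x) /\
  (forall x, L x -> fri C x) /\
  ~ (forall x, icr C x <-> fri C x).
Proof.
  intros L C. unfold C, L. split; [|split; [|split]].
  - exact (icr_hull_char u hu1).
  -
    exists (fun n => (1 / 2) * u n).
    apply (mixed_in_icr u (fun _ => 0) (1 / 2)); [exact l1_zero | lra | intros; ring].
  - exact (l1_in_fri u hu2).
  -
    intros Heq. apply (l1_not_icr u hu1 (fun _ => 0) l1_zero), Heq.
    exact (l1_in_fri u hu2 _ l1_zero).
Qed.
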